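(* In the setting of the context, for every $H\in\mathbb S^n$, $$\langle\mathcal D(H),\mathcal D^\perp(H)\rangle=2\langle\Theta\circ H_O,\Theta^\perp\circ H_O\rangle\ge0,$$ with equality only if $H_O=0$, and $$\|H\|_F^2-\|\mathcal M(H)\|_F^2=\|\mathcal P\mathcal D(H)\|_F^2+\|\mathcal P^\perp\mathcal D^\perp(H)\|_F^2+4\langle\Theta\circ H_O,\Theta^\perp\circ H_O\rangle.$$
   Context: $\mathbb S^n$: real symmetric $n\times n$ matrices, $\langle X,Y\rangle=\operatorname{tr}(X^\top Y)$, Frobenius norm. $\mathcal AX=(\langle A_i,X\rangle)_{i=1}^m$ with $A_i\in\mathbb S^n$, surjective; $\mathcal P=\mathcal A^*(\mathcal A\mathcal A^* )^{-1}\mathcal A$, $\mathcal P^\perp=\mathrm{Id}-\mathcal P$. $Z_\star=X_\star-\sigma S_\star$ ($\sigma>0$) for a strictly complementary KKT point of the SDP pair min $\langle C,X\rangle$ s.t. $\mathcal AX=b$, $X\succeq0$ / max $b^\top y$ s.t. $\mathcal A^*y+S=C$, $S\succeq0$; $Z_\star=Q_\star\operatorname{diag}(\lambda_1,\dots,\lambda_n)Q_\star^\top$ with $Q_\star$ orthogonal, $\lambda_1\ge\dots\ge\lambda_r>0>\lambda_{r+1}\ge\dots\ge\lambda_n$, $r=\operatorname{rank}X_\star$. $\Theta\in\mathbb R^{(n-r)\times r}$, $\Theta_{ij}=\lambda_j/(\lambda_j-\lambda_{i+r})$; $\Theta^\perp=E_{(n-r)\times r}-\Theta$ (all-ones minus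 $\Theta$); $\Omega=\begin{pmatrix}E_r&\Theta^\top\\\Theta&0\end{pmatrix}$. For $H\in\mathbb S^n$, $Q_\star^\top HQ_\star=\begin{pmatrix}H_X&H_O^\top\\H_O&H_S\end{pmatrix}$ with $H_O\in\mathbb R^{(n-r)\times r}$. $\mathcal D(H)=Q_\star(\Omega\circ(Q_\star^\top HQ_\star))Q_\star^\top$ ($\circ$ Hadamard), $\mathcal D^\perp(H)=H-\mathcal D(H)$, $\mathcal M(H)=\mathcal P\mathcal D^\perp(H)+\mathcal P^\perp\mathcal D(H)$. *)

From mathcomp Require Import all_boot all_order all_algebra.
Set Implicit Arguments. Unset Strict Implicit. Unset Printing Implicit Defensive.
Import Order.TTheory GRing.Theory Num.Theory.
Local Open Scope ring_scope.

Section Defs.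
Variable R : realFieldType.

Definition frob (n : nat) (X Y : 'M[R]_n) : R := \tr (X^T *m Y).
Definition frob2 (n : nat) (X : 'M[R]_n) : R := frob X X.

Definition symmx (n : nat) (X : 'M[R]_n) : Prop := X^T = X.
Definition psdmx (n : nat) (X : 'M[R]_n) : Prop :=
  symmx X /\ forall u : 'cV[R]_n, 0 <= (u^T *m X *m u) 0 0.
Definition orthogonalmx (n : nat) (Q : 'M[R]_n) : Prop := Q^T *m Q = 1%:M.

Definition Aop (n m : nat) (A : 'I_m -> 'M[R]_n) (X : 'M[R]_n) : 'cV[R]_m :=
  \col_i frob (A i) X.
Definition Aadj (n m : nat) (A : 'I_m -> 'M[R]_n) (y : 'cV[R]_m) : 'M[R]_n :=
  \sum_(i < m) (y i 0 *: A i).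
Definition AAadj (n m : nat) (A : 'I_m -> 'M[R]_n) : 'M[R]_m :=
  \matrix_(i, j) frob (A i) (A j).
Definition Pop (n m : nat) (A : 'I_m -> 'M[R]_n) (H : 'M[R]_n) : 'M[R]_n :=
  Aadj A (invmx (AAadj A) *m Aop A H).
Definition Pperp (n m : nat) (A : 'I_m -> 'M[R]_n) (H : 'M[R]_n) : 'M[R]_n :=
  H - Pop A H.
Definition Asurj (n m : nat) (A : 'I_m -> 'M[R]_n) : Prop :=
  forall v : 'cV[R]_m, exists X : 'M[R]_n, symmx X /\ Aop A X = v.

(* Indices of 'I_n: the first r are the "X-block", the rest the "S-block".
   Theta_{ij} = lam_j/(lam_j - lam_{i+r}) is stored at the (i+r, j) position,
   i.e. ThetaE lam i j = lam j / (lam j - lam i) for r <= i, j < r. *)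
Definition ThetaE (n : nat) (lam : 'I_n -> R) (i j : 'I_n) : R :=
  lam j / (lam j - lam i).

(* Omega = [[E_r, Theta^T],[Theta, 0]] *)
Definition Omega (n r : nat) (lam : 'I_n -> R) : 'M[R]_n :=
  \matrix_(i, j)
    if (i < r)%N then
      (if (j < r)%N then 1 else ThetaE lam j i)
    else (if (j < r)%N then ThetaE lam i j else 0).

Definition Dop (n r : nat) (Q : 'M[R]_n) (lam : 'I_n -> R) (H : 'M[R]_n)
  : 'M[R]_n :=
  Q *m (map2_mx (fun a b => a * b) (Omega r lam) (Q^T *m H *m Q)) *m Q^T.
Definition Dperp (n r : nat) (Q : 'M[R]_n) (lam : 'I_n -> R) (H : 'M[R]_n)
  : 'M[R]_n := H - Dop r Q lam H.
Definition Mop (n m r : nat) (A : 'I_m -> 'M[R]_n) (Q : 'M[R]_n)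
  (lam : 'I_n -> R) (H : 'M[R]_n) : 'M[R]_n :=
  Pop A (Dperp r Q lam H) + Pperp A (Dop r Q lam H).

(* H_O entries: (Q^T H Q)_{ij} with r <= i, j < r *)
Definition HOe (n : nat) (Q : 'M[R]_n) (H : 'M[R]_n) (i j : 'I_n) : R :=
  (Q^T *m H *m Q) i j.

Definition ThetaIP (n r : nat) (Q : 'M[R]_n) (lam : 'I_n -> R) (H : 'M[R]_n) : R :=
  \sum_(i : 'I_n | (r <= i)%N) \sum_(j : 'I_n | (j < r)%N)
     (ThetaE lam i j * HOe Q H i j) * ((1 - ThetaE lam i j) * HOe Q H i j).

End Defs.

From mathcomp Require Import all_boot all_order all_algebra.
From mathcomp Require Import ring.
Set Implicit Arguments. Unset Strict Implicit. Unset Printing Implicit Defensive.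
Import Order.TTheory GRing.Theory Num.Theory.
Local Open Scope ring_scope.

(* Conjugating by the orthogonal Q turns D into the Hadamard product with
   Omega, and the Frobenius product is invariant under this conjugation.
   Omega is 1 on the X-block and 0 on the S-block, so those blocks of H go
   entirely to D or entirely to D^perp and contribute nothing to <D, D^perp>;
   each off-diagonal entry h of H_O (counted twice, by symmetry) contributes
   Theta (1 - Theta) h^2, which is positive unless h = 0 because the sign
   pattern of lam puts Theta strictly between 0 and 1.  The norm identity is
   Pythagoras for the complementary orthogonal projections P and P^perp,
   applied to H = D(H) + D^perp(H). *)

Section Frobenius.
Variable R : realFieldType.

Lemma sum_sqr_eq0 (I : finType) (f : I -> R) :
  \sum_i f i * f i = 0 -> forall i, f i = 0.
Proof.
move=> f0 i; have f_ge0 k : true -> 0 <= f k * f k by rewrite -expr2 sqr_ge0.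
by apply/eqP; rewrite -[f i == 0]orbb -mulf_eq0; apply/eqP/(psumr_eq0P f_ge0).
Qed.

Variable n : nat.
Implicit Types X Y Z Q : 'M[R]_n.

Lemma frobE X Y : frob X Y = \sum_i \sum_j X i j * Y i j.
Proof.
rewrite /frob /mxtrace exchange_big; apply: eq_bigr => i _; rewrite mxE.
by apply: eq_bigr => j _; rewrite mxE.
Qed.

Lemma frobC X Y : frob X Y = frob Y X.
Proof. by rewrite !frobE; apply: eq_bigr => i _; apply: eq_bigr => j _; rewrite mulrC. Qed.

Lemma frobDl X Y Z : frob (X + Y) Z = frob X Z + frob Y Z.
Proof. by rewrite /frob linearD /= mulmxDl mxtraceD. Qed.

Lemma frobDr X Y Z : frob Z (X + Y) = frob Z X + frob Z Y.
Proof. by rewrite frobC frobDl -!(frobC Z). Qed.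

Lemma frobNr X Y : frob X (- Y) = - frob X Y.
Proof. by rewrite /frob mulmxN raddfN. Qed.

Lemma frobZl a X Y : frob (a *: X) Y = a * frob X Y.
Proof. by rewrite /frob linearZ /= -scalemxAl mxtraceZ. Qed.

Lemma frob0l Y : frob 0 Y = 0.
Proof. by rewrite /frob trmx0 mul0mx mxtrace0. Qed.

Lemma frob_suml m (F : 'I_m -> 'M[R]_n) Y :
  frob (\sum_i F i) Y = \sum_i frob (F i) Y.
Proof. by elim/big_rec2: _ => [|i x y _ <-]; rewrite ?frob0l ?frobDl. Qed.

Lemma frob2D X Y : frob2 (X + Y) = frob2 X + 2 * frob X Y + frob2 Y.
Proof. rewrite /frob2 frobDl !frobDr (frobC Y X); ring. Qed.

Lemma frob2_eq0 X : frob2 X = 0 -> X = 0.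
Proof.
rewrite /frob2 frobE pair_bigA /= => /sum_sqr_eq0 X0.
by apply/matrixP => i j; rewrite mxE (X0 (i, j)).
Qed.

Lemma frob_conj Q X Y : Q^T *m Q = 1%:M ->
  frob (Q *m X *m Q^T) (Q *m Y *m Q^T) = frob X Y.
Proof.
move=> QtQ; rewrite /frob !trmx_mul trmxK -!mulmxA (mulmxA Q^T Q) QtQ mul1mx.
by rewrite mxtrace_mulC -!mulmxA QtQ mulmx1.
Qed.

End Frobenius.

Section Projection.
Variables (R : realFieldType) (n m : nat) (A : 'I_m -> 'M[R]_n).

Lemma frob_Aadj (y : 'cV_m) Y : frob (Aadj A y) Y = \sum_i y i 0 * Aop A Y i 0.
Proof. by rewrite /Aadj frob_suml; apply: eq_bigr => i _; rewrite frobZl mxE. Qed.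

Lemma Aop_Aadj y : Aop A (Aadj A y) = AAadj A *m y.
Proof.
apply/matrixP => k l; rewrite (ord1 l) !mxE frobC frob_Aadj.
by apply: eq_bigr => i _; rewrite !mxE frobC mulrC.
Qed.

Lemma trmx_AAadj : (AAadj A)^T = AAadj A.
Proof. by apply/matrixP => i j; rewrite !mxE frobC. Qed.

Lemma Aadj_eq0 y : Aop A (Aadj A y) = 0 -> Aadj A y = 0.
Proof.
move=> AAy0; apply: frob2_eq0; rewrite /frob2 frob_Aadj AAy0.
by rewrite big1 // => i _; rewrite mxE mulr0.
Qed.

Hypothesis A_surj : Asurj A.

Lemma Aadj_inj y : Aadj A y = 0 -> y = 0.
Proof.
move=> Ay0; have [X [_ AX]] := A_surj y.
have : frob (Aadj A y) X = 0 by rewrite Ay0 frob0l.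
rewrite frob_Aadj AX => /sum_sqr_eq0 y0.
by apply/matrixP => i j; rewrite (ord1 j) mxE y0.
Qed.

Lemma unitmx_AAadj : AAadj A \in unitmx.
Proof.
rewrite unitmxE unitfE; apply/negP => /det0P [v v_neq0 vG0].
suff vT0 : v^T = 0 by rewrite -trmx_eq0 vT0 eqxx in v_neq0.
apply/Aadj_inj/Aadj_eq0.
by rewrite Aop_Aadj -trmx_AAadj -trmx_mul vG0 trmx0.
Qed.

Lemma Pop_idem X : Pop A (Pop A X) = Pop A X.
Proof.
rewrite {1}/Pop {2}/Pop Aop_Aadj [AAadj A *m _]mulmxA.
by rewrite mulmxV ?mul1mx // unitmx_AAadj.
Qed.

Lemma frob_Pop_sym X Y : frob (Pop A X) Y = frob X (Pop A Y).
Proof.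
set Gi := invmx (AAadj A).
have Gi_sym i k : Gi i k = Gi k i.
  by rewrite /Gi -{1}trmx_AAadj -trmx_inv mxE.
rewrite (frobC X) /Pop !frob_Aadj.
under eq_bigr => i _ do rewrite mxE big_distrl.
under [RHS]eq_bigr => i _ do rewrite mxE big_distrl.
rewrite [RHS]exchange_big; apply: eq_bigr => i _; apply: eq_bigr => k _.
by rewrite /= Gi_sym /Gi; ring.
Qed.

Lemma frob_Pop_Pperp X Y : frob (Pop A X) (Pperp A Y) = 0.
Proof. by rewrite /Pperp frobDr frobNr !frob_Pop_sym Pop_idem subrr. Qed.

Lemma frob2_Pop_Pperp X : frob2 X = frob2 (Pop A X) + frob2 (Pperp A X).
Proof.
rewrite -{1}[X](subrK (Pop A X)) addrC -/(Pperp A X).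
by rewrite frob2D frob_Pop_Pperp mulr0 addr0.
Qed.

Lemma frob2_sub_swap D E :
  frob2 (D + E) - frob2 (Pop A E + Pperp A D)
  = frob2 (Pop A D) + frob2 (Pperp A E) + 2 * frob D E.
Proof.
rewrite [frob2 (D + E)]frob2D [frob2 (_ + Pperp A D)]frob2D frob_Pop_Pperp.
rewrite (frob2_Pop_Pperp D) (frob2_Pop_Pperp E); ring.
Qed.

End Projection.

Section Omega.
Variables (R : realFieldType) (n r : nat) (lam : 'I_n -> R) (Q : 'M[R]_n).

Lemma sum_offdiag_blocks (V : nmodType) (f : 'I_n -> 'I_n -> V) :
  (forall i j : 'I_n, (i < r)%N -> (j < r)%N -> f i j = 0) ->
  (forall i j : 'I_n, (r <= i)%N -> (r <= j)%N -> f i j = 0) ->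
  \sum_i \sum_j f i j
  = \sum_(i : 'I_n | (r <= i)%N) \sum_(j : 'I_n | (j < r)%N) (f i j + f j i).
Proof.
move=> fXX fSS; rewrite (bigID (fun i : 'I_n => (i < r)%N)) /= addrC.
under eq_bigl => i do rewrite -leqNgt.
under [in RHS]eq_bigr => i _ do rewrite big_split /=.
rewrite big_split /= [X in _ = _ + X]exchange_big /=; congr (_ + _).
- apply: eq_bigr => i ri; rewrite (bigID (fun j : 'I_n => (j < r)%N)) /=.
  by rewrite [X in _ + X]big1 ?addr0 // => j; rewrite -leqNgt; exact: fSS.
- apply: eq_bigr => i ir; rewrite (bigID (fun j : 'I_n => (j < r)%N)) /=.
  rewrite big1 ?add0r => [|j]; last exact: fXX.
  by apply: eq_bigl => j; rewrite -leqNgt.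
Qed.

Lemma frob_hadamard_Omega (G : 'M[R]_n) : G^T = G ->
  let W := map2_mx (fun a b => a * b) (Omega r lam) G in
  frob W (G - W)
  = 2 * \sum_(i : 'I_n | (r <= i)%N) \sum_(j : 'I_n | (j < r)%N)
          (ThetaE lam i j * G i j) * ((1 - ThetaE lam i j) * G i j).
Proof.
move=> G_sym W; have Gji i j : G j i = G i j by rewrite -{1}G_sym mxE.
rewrite frobE sum_offdiag_blocks => [|i j ir jr|i j ri rj].
- rewrite mulr_sumr; apply: eq_bigr => i ri; rewrite mulr_sumr.
  by apply: eq_bigr => j jr; rewrite !mxE ltnNge ri jr /= Gji; ring.
- by rewrite !mxE ir jr; ring.
- by rewrite !mxE !ltnNge ri rj /= !mul0r.
Qed.

Lemma frob_Dop_Dperp H : orthogonalmx Q -> symmx H ->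
  frob (Dop r Q lam H) (Dperp r Q lam H) = 2 * ThetaIP r Q lam H.
Proof.
move=> QtQ H_sym; have QQt : Q *m Q^T = 1%:M by apply: mulmx1C.
set G := Q^T *m H *m Q.
have G_sym : G^T = G by rewrite /G !trmx_mul trmxK H_sym mulmxA.
have H_conj : H = Q *m G *m Q^T.
  by rewrite /G !mulmxA QQt mul1mx -mulmxA QQt mulmx1.
rewrite /Dperp {2}H_conj /Dop -mulmxBl -mulmxBr -/G frob_conj //.
exact: frob_hadamard_Omega.
Qed.

Hypothesis lam_gt0 : forall i : 'I_n, (i < r)%N -> 0 < lam i.
Hypothesis lam_lt0 : forall i : 'I_n, (r <= i)%N -> lam i < 0.

Lemma ThetaE_gt0_lt1 (i j : 'I_n) : (r <= i)%N -> (j < r)%N ->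
  0 < ThetaE lam i j < 1.
Proof.
move=> ri jr; have := lam_lt0 ri; have := lam_gt0 jr => lj_gt0 li_lt0.
have gap_gt0 : 0 < lam j - lam i by rewrite subr_gt0 (lt_trans li_lt0).
by rewrite /ThetaE divr_gt0 //= ltr_pdivrMr // mul1r ltrDl oppr_gt0.
Qed.

Lemma ThetaIP_term_ge0 (i j : 'I_n) g : (r <= i)%N -> (j < r)%N ->
  0 <= ThetaE lam i j * g * ((1 - ThetaE lam i j) * g) ?= iff (g == 0).
Proof.
move=> ri jr; have /andP[t_gt0 t_lt1] := ThetaE_gt0_lt1 ri jr.
have c_gt0 : 0 < ThetaE lam i j * (1 - ThetaE lam i j).
  by rewrite mulr_gt0 // subr_gt0.
have -> : ThetaE lam i j * g * ((1 - ThetaE lam i j) * g)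
          = ThetaE lam i j * (1 - ThetaE lam i j) * g ^+ 2 by ring.
split; first by rewrite mulr_ge0 ?sqr_ge0 // ltW.
by rewrite eq_sym mulf_eq0 gt_eqF // sqrf_eq0.
Qed.

Lemma ThetaIP_ge0 H : 0 <= ThetaIP r Q lam H.
Proof.
apply: sumr_ge0 => i ri; apply: sumr_ge0 => j jr.
exact: (ThetaIP_term_ge0 _ ri jr).
Qed.

Lemma ThetaIP_eq0 H : ThetaIP r Q lam H = 0 ->
  forall i j : 'I_n, (r <= i)%N -> (j < r)%N -> HOe Q H i j = 0.
Proof.
have term (i j : 'I_n) (ri : (r <= i)%N) (jr : (j < r)%N) :=
  ThetaIP_term_ge0 (HOe Q H i j) ri jr.
move=> T0 i j ri jr; apply/eqP; rewrite -(term i j ri jr).2.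
have row0 :=
  psumr_eq0P (fun i ri => sumr_ge0 _ (fun j jr => (term i j ri jr).1)) T0 ri.
by rewrite (psumr_eq0P (fun j jr => (term i j ri jr).1) row0 jr).
Qed.

End Omega.

Theorem lemma2 (R : realFieldType) (n m : nat)
  (A : 'I_m -> 'M[R]_n) (b : 'cV[R]_m) (C : 'M[R]_n)
  (Xs Ss : 'M[R]_n) (ys : 'cV[R]_m) (sigma : R)
  (Q : 'M[R]_n) (lam : 'I_n -> R) (r : nat) :
  (forall i, symmx (A i)) ->
  Asurj A ->
  symmx C ->
  (* KKT point *)
  Aop A Xs = b -> psdmx Xs ->
  Aadj A ys + Ss = C -> psdmx Ss ->
  frob Xs Ss = 0 ->
  (* strict complementarity *)
  (\rank Xs + \rank Ss)%N = n ->
  0 < sigma ->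
  (* eigendecomposition of Z = X - sigma S *)
  orthogonalmx Q ->
  Xs - sigma *: Ss = Q *m diag_mx (\row_i lam i) *m Q^T ->
  r = \rank Xs ->
  (forall i j : 'I_n, (i <= j)%N -> lam j <= lam i) ->
  (forall i : 'I_n, (i < r)%N -> 0 < lam i) ->
  (forall i : 'I_n, (r <= i)%N -> lam i < 0) ->
  forall H : 'M[R]_n, symmx H ->
    [/\ frob (Dop r Q lam H) (Dperp r Q lam H) = 2 * ThetaIP r Q lam H,
        0 <= ThetaIP r Q lam H,
        (frob (Dop r Q lam H) (Dperp r Q lam H) = 0 ->
           forall i j : 'I_n, (r <= i)%N -> (j < r)%N -> HOe Q H i j = 0) &
        frob2 H - frob2 (Mop r A Q lam H)
          = frob2 (Pop A (Dop r Q lam H)) + frob2 (Pperp A (Dperp r Q lam H))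
            + 4 * ThetaIP r Q lam H].
Proof.
move=> _ A_surj _ _ _ _ _ _ _ _ Q_orth _ _ _ lam_gt0 lam_lt0 H H_sym.
have DDperp := frob_Dop_Dperp r lam Q_orth H_sym.
split.
- exact: DDperp.
- exact: ThetaIP_ge0.
- rewrite DDperp => /eqP; rewrite mulf_eq0 pnatr_eq0 /= => /eqP.
  exact: ThetaIP_eq0.
- have H_split : H = Dop r Q lam H + Dperp r Q lam H by rewrite addrC subrK.
  by rewrite {1}H_split /Mop frob2_sub_swap // DDperp mulrA -natrM.
Qed.
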